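(* Let $n\ge 2$. For every $T_1,T_2\in\mathcal{T}_n$, $\mathit{TD}'(T_1,T_2)$ is an even integer smaller than $2n-2$.
   Context: A phylogenetic tree is a finite rooted tree (arcs directed away from the root) with no node of outdegree $1$, whose leaves are injectively labeled. $\mathcal{T}_n$ denotes the set of phylogenetic trees with $n$ leaves labeled $1,\dots,n$, up to label-preserving isomorphism. Internal nodes are the non-leaf nodes; $\mathcal{L}(T)$ is the set of leaves. The height of a node is the length of a longest directed path from it to a leaf. The bottom-up ordering of $T=(V,E)\in\mathcal{T}_n$ is the unique injective map $\ell:V\to\{1,\dots,|V|\}$ such that: (a) for a leaf $v$, $\ell(v)$ is its label; (b) if $\mathrm{height}(u)<\mathrm{height}(v)$ then $\ell(u)<\ell(v)$; (c) if $0<\mathrm{height}(u)=\mathrm{height}(v)$ and $\min\{\ell(x): x \text{ child of } u\}<\min\{\ell(x): x\text{ child of } v\}$ then $\ell(u)<\ell(v)$. For a subset $S=\{i_1<\dots<i_k\}$ with $k\ge 2$, $\kappa(S)$ is the cyclic permutation $(i_1,i_2,\dots,i_k)$. The matching permutation of $T$ is $\pi(T)=\prod_{u\in V\setminus\mathcal{L}(T)}\kappa(\ell(\mathrm{children}(u)))$, regarded as an element of $\mathfrak{S}_{2n-2}$ fixing $|V|,\dots,2n-2$. Permutations are composed right to left. $\mathit{TD}'(T_1,T_2)$ is the least number of transpositions whose product is $\pi(T_2)^{-1}\pi(T_1)$ (zero if this is the identity). *)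

From mathcomp Require Import all_boot all_order all_fingroup.
From Stdlib Require Import ClassicalEpsilon.
Set Implicit Arguments. Unset Strict Implicit. Unset Printing Implicit Defensive.

Section Trees.
Variables (V : finType) (par : V -> option V).

Definition children (u : V) : {set V} := [set v | par v == Some u].
Definition is_leaf (u : V) : bool := children u == set0.

(* height: length of a longest directed path from v to a leaf.
   hgt f v computes it with recursion depth f; any directed path in a
   tree on #|V| vertices has fewer than #|V| arcs, so fuel #|V| suffices. *)
Fixpoint hgt (f : nat) (v : V) : nat :=
  if f is f'.+1 then \max_(c in children v) (hgt f' c).+1 else 0.
Definition height (v : V) : nat := hgt #|V| v.
End Trees.

(* A phylogenetic tree with n leaves labelled 1..n: a finite rooted tree
   (arcs directed away from the root, encoded by the parent map), with no
   node of outdegree 1, and an injective labelling of its leaves onto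
   {1,...,n}.  (Labels of internal nodes are irrelevant.) *)
Record phylo_tree (n : nat) := PhyloTree {
  pt_V : finType;
  pt_par : pt_V -> option pt_V;
  pt_lab : pt_V -> nat;
  pt_root : exists r, forall v, pt_par v = None <-> v = r;
  pt_acyclic : forall v, exists k, iter k (obind pt_par) (Some v) = None;
  pt_no_outdeg1 : forall u, #|children pt_par u| != 1;
  pt_lab_range : forall v, is_leaf pt_par v -> 1 <= pt_lab v <= n;
  pt_lab_inj : {in is_leaf pt_par &, injective pt_lab};
  pt_nleaves : #|[set v | is_leaf pt_par v]| = n
}.
Arguments pt_V {n} p.
Arguments pt_par {n} p _.
Arguments pt_lab {n} p _.

Section BottomUp.
Variables (n : nat) (T : phylo_tree n).

Definition min_child_lt (l : pt_V T -> nat) (u v : pt_V T) : Prop :=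
  exists2 x, x \in children (pt_par T) u & forall y, y \in children (pt_par T) v -> l x < l y.

Definition is_bottom_up (l : pt_V T -> nat) : Prop :=
  [/\ injective l,
      (forall v, 1 <= l v <= #|pt_V T|),
      (forall v, is_leaf (pt_par T) v -> l v = pt_lab T v),
      (forall u v, height (pt_par T) u < height (pt_par T) v -> l u < l v) &
      (forall u v, 0 < height (pt_par T) u -> height (pt_par T) u = height (pt_par T) v -> min_child_lt l u v -> l u < l v)].

(* "the unique injective map such that ..." : definite description *)
Definition bottom_up : pt_V T -> nat :=
  epsilon (inhabits (fun _ => 0)) is_bottom_up.
End BottomUp.
Arguments bottom_up {n} T _.
Arguments is_bottom_up {n} T l.
Arguments min_child_lt {n} T l u v.

(* For S = {i_1 < ... < i_k}, kappa S maps i_j to i_{j+1} and i_k to i_1. *)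
Definition kappa_seq (N : nat) (S : {set 'I_N}) : seq 'I_N :=
  sort (fun a b : 'I_N => (a <= b)%N) (enum S).

Lemma kappa_seq_uniq N (S : {set 'I_N}) : uniq (kappa_seq S).
Proof. by rewrite sort_uniq enum_uniq. Qed.

Definition kappa (N : nat) (S : {set 'I_N}) : {perm 'I_N} :=
  perm (can_inj (prev_next (kappa_seq_uniq S))).

(* Points 1..2n-2 are represented by the ordinals 0..2n-3 of 'I_(2n-2)
   (point j is the ordinal j-1). *)
Definition child_labels (n : nat) (T : phylo_tree n) (u : pt_V T)
  : {set 'I_(2 * n - 2)} :=
  [set j : 'I_(2 * n - 2) |
     [exists c in children (pt_par T) u, bottom_up T c == j.+1]].

Arguments child_labels {n} T u.

(* pi(T) = prod over internal nodes u of kappa(l(children(u))).  These cycles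
   are pairwise disjoint, so the order of the product is immaterial. *)
Definition matching_perm (n : nat) (T : phylo_tree n) : {perm 'I_(2 * n - 2)} :=
  (\prod_(u : pt_V T | ~~ is_leaf (pt_par T) u) kappa (child_labels T u))%g.

Definition is_prod_transp (N : nat) (s : {perm 'I_N}) (k : nat) : bool :=
  [exists ts : k.-tuple ('I_N * 'I_N),
     all dpair ts && (s == \prod_(t <- ts) tperm t.1 t.2)%g].

Lemma is_prod_transp_ex N (s : {perm 'I_N}) : exists k, is_prod_transp s k.
Proof.
have [ts -> dts] := prod_tpermP s.
exists (size ts); apply/existsP; exists (in_tuple ts); by rewrite dts eqxx.
Qed.

Definition min_transp (N : nat) (s : {perm 'I_N}) : nat :=
  ex_minn (is_prod_transp_ex s).

Arguments matching_perm {n} T.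

(* TD'(T1,T2) = least number of transpositions with product pi(T2)^-1 pi(T1)
   (composition right to left, i.e. x |-> pi(T2)^-1 (pi(T1) x)); in
   MathComp's {perm} group, (p * q) x = q (p x), so this is pi T1 * (pi T2)^-1. *)
Definition TD' (n : nat) (T1 T2 : phylo_tree n) : nat :=
  min_transp (matching_perm T1 * (matching_perm T2)^-1)%g.

(* The bottom-up ordering l exists: take the rank of the key that gives a leaf
   its label and an internal node v the value B ^ height v plus the least key of
   a child of v, with B = n + 2 > n; keys grow with height and, at equal height,
   with the least child key.  The root has the greatest label, at most
   #|V| <= 2n - 1, so l maps the children of each internal node u injectively
   into {1, ..., 2n - 2} and pi(T) is a product of disjoint cycles of lengths
   #|children u|.  Each non-root node has exactly one parent, so the numbers
   #|children u| - 1 add up to n - 1: every pi(T) has sign (-1)^(n-1), and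
   pi(T2)^-1 pi(T1) is even.  A product of t transpositions has sign (-1)^t,
   and a permutation moving m points is a product of at most m - 1
   transpositions, so TD' is even and at most 2n - 3. *)

From mathcomp Require Import all_boot all_order all_fingroup.
From mathcomp Require Import zify.
From Stdlib Require Import ClassicalEpsilon.
Set Implicit Arguments. Unset Strict Implicit. Unset Printing Implicit Defensive.
Import Order.TTheory.

Section RootedTree.
Variables (V : finType) (par : V -> option V).

Lemma height_le_card v : height par v <= #|V|.
Proof.
rewrite /height; elim: #|V| v => [|f IH] v //=.
by apply/bigmax_leqP => c _; apply: IH.
Qed.

Lemma height_eq0 v : (height par v == 0) = is_leaf par v.
Proof.
rewrite /height /is_leaf; have : 0 < #|V| by apply/card_gt0P; exists v.
case: #|V| => // f _ /=.
have [->|[c cv]] := set_0Vmem (children par v); first by rewrite big_set0 !eqxx.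
have /negbTE -> : children par v != set0 by apply/set0Pn; exists c.
by apply/negbTE; rewrite -lt0n (leq_trans _ (leq_bigmax_cond _ cv)).
Qed.

Section Acyclic.
Hypothesis par_acyclic : forall v, exists k, iter k (obind par) (Some v) = None.

Let reaches_root v : exists k, iter k (obind par) (Some v) == None.
Proof. by have [k Hk] := par_acyclic v; exists k; rewrite Hk. Qed.

Let depth v := ex_minn (reaches_root v).

Let depth_child c u : c \in children par u -> depth u < depth c.
Proof.
rewrite inE => /eqP pc; rewrite /depth.
case: (ex_minnP (reaches_root c)) => -[|d] // Hd _.
case: (ex_minnP (reaches_root u)) => e _ He.
by rewrite ltnS He //; rewrite iterSr /= pc in Hd.
Qed.

(* A descending path from v stays in [below v] with strictly increasing depth,
   so #|below v| is enough fuel to compute the height of v. *)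
Let below v := [set w | depth v <= depth w].

Let hgt_stable f v : #|below v| <= f -> hgt par f.+1 v = hgt par f v.
Proof.
elim: f v => [|f IH] v below_f.
  by move: below_f; rewrite leqn0 cards_eq0 => /eqP/setP/(_ v); rewrite !inE leqnn.
apply: eq_bigr => c cv; congr _.+1; apply: IH; rewrite -ltnS (leq_trans _ below_f) //.
apply/proper_card/properP; split.
  by apply/subsetP => w; rewrite !inE; apply: leq_trans (ltnW (depth_child cv)).
by exists v; rewrite !inE ?leqnn // -ltnNge depth_child.
Qed.

Lemma height_child c u : c \in children par u -> height par c < height par u.
Proof.
move=> cu; rewrite /height -[hgt par #|V| u]hgt_stable ?max_card //=.
exact: (leq_bigmax_cond _ cu).
Qed.

Variable r : V.
Hypothesis par_root : forall v, par v = None <-> v = r.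

Lemma height_lt_root v : v != r -> height par v < height par r.
Proof.
have [m] := ubnP (depth v); elim: m v => // m IH v dv vr.
case pv: (par v) => [u|]; last by rewrite (proj1 (par_root v) pv) eqxx in vr.
have vu : v \in children par u by rewrite inE pv.
have [<-|ur] := eqVneq u r; first exact: height_child.
exact: ltn_trans (height_child vu) (IH u (leq_trans (depth_child vu) dv) ur).
Qed.

End Acyclic.
End RootedTree.

Section Counting.
Variables (V : finType) (par : V -> option V) (r : V).
Hypothesis par_root : forall v, par v = None <-> v = r.

Lemma sum_card_children : \sum_u #|children par u| = #|V|.-1.
Proof.
transitivity (\sum_v \sum_u (par v == Some u : nat)).
  rewrite exchange_big; apply: eq_bigr => u _.
  by rewrite -sum1dep_card big_mkcond; apply: eq_bigr => v _; case: eqP.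
rewrite -(cardC1 r) -sum1_card [RHS]big_mkcond; apply: eq_bigr => v _ /=.
case pv: (par v) => [w|]; rewrite inE; last first.
  by rewrite big1 // (proj1 (par_root v) pv) eqxx.
have /negPf -> : v != r by apply/eqP => /(proj2 (par_root v)); rewrite pv.
rewrite (bigD1 w) //= eqxx big1 // => u /negPf uw.
by rewrite -(inj_eq (@Some_inj _)) eq_sym in uw; rewrite uw.
Qed.

Local Notation leaves := [set v | is_leaf par v].

Let sum_internal_card_children :
  \sum_(u | ~~ is_leaf par u) #|children par u| = #|leaves| + #|~: leaves| - 1.
Proof.
rewrite cardsC subn1 -sum_card_children [RHS](bigID (is_leaf par)) /=.
by rewrite [in RHS]big1 // => u /eqP ->; rewrite cards0.
Qed.

Let card_internal : \sum_(u | ~~ is_leaf par u) 1 = #|~: leaves|.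
Proof. by rewrite sum1dep_card; apply: eq_card => u; rewrite !inE. Qed.

Lemma sum_internal_pred_card_children :
  \sum_(u | ~~ is_leaf par u) (#|children par u|).-1 = #|leaves|.-1.
Proof.
have split_pred : \sum_(u | ~~ is_leaf par u) #|children par u| =
    \sum_(u | ~~ is_leaf par u) (#|children par u|).-1 + \sum_(u | ~~ is_leaf par u) 1.
  by rewrite -big_split; apply: eq_bigr => u; rewrite /is_leaf -card_gt0 /=; lia.
move: split_pred; rewrite sum_internal_card_children card_internal; lia.
Qed.

Lemma card_le_double_leaves (no_unary : forall u, #|children par u| != 1) :
  #|V| <= (2 * #|leaves|).-1.
Proof.
have : \sum_(u | ~~ is_leaf par u) 1 + \sum_(u | ~~ is_leaf par u) 1 <=
    \sum_(u | ~~ is_leaf par u) #|children par u|.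
  rewrite -big_split; apply: leq_sum => u; rewrite /is_leaf -card_gt0 /=.
  by have := no_unary u; lia.
have : 0 < #|V| by apply/card_gt0P; exists r.
rewrite sum_internal_card_children card_internal -(cardsC leaves); lia.
Qed.

End Counting.

Section Rank.
Variables (X : finType) (key : X -> nat).

Definition rank x := #|[set y | key y < key x]|.+1.

Lemma ltn_rank x y : (rank x < rank y) = (key x < key y).
Proof.
apply/idP/idP => [|lt_xy]; last first.
  rewrite ltnS (cardsD1 x [set z | key z < key y]) inE lt_xy add1n ltnS.
  apply/subset_leq_card/subsetP => z; rewrite !inE => lt_zx.
  by rewrite (ltn_trans lt_zx lt_xy) andbT; apply: contraTneq lt_zx => ->; rewrite ltnn.
apply: contraLR; rewrite -!leqNgt ltnS => le_yx; apply/subset_leq_card/subsetP => z.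
by rewrite !inE => /leq_trans; apply.
Qed.

Lemma rank_inj : injective key -> injective rank.
Proof.
move=> key_inj x y eq_rank; apply: key_inj.
by case: (ltngtP (key x) (key y)) => // lt_key; have := lt_key;
  rewrite -ltn_rank eq_rank ltnn.
Qed.

Lemma rank_le_card x : rank x <= #|X|.
Proof.
rewrite -cardsT; apply/proper_card; rewrite properT; apply/eqP => /setP/(_ x).
by rewrite !inE ltnn.
Qed.

End Rank.

Lemma card_le_inj_range (X : finType) (A : {pred X}) (f : X -> nat) a b :
  {in A &, injective f} -> {in A, forall x, a <= f x < a + b} -> #|A| <= b.
Proof.
move=> f_inj f_range; rewrite cardE -(size_map f) -(size_iota a b).
apply: uniq_leq_size => [|k /mapP[x]].
  by rewrite map_inj_in_uniq ?enum_uniq // => x y; rewrite !mem_enum; apply: f_inj.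
by rewrite mem_enum mem_iota => /f_range ? ->.
Qed.

Lemma card_lt_inj_range (X : finType) (A : {set X}) (f : X -> nat) x :
  {in A &, injective f} -> {in A, forall y, 0 < f y <= #|A|} -> x \in A ->
  #|[set y in A | f y < f x]|.+1 = f x.
Proof.
move=> f_inj f_range xA; have /andP[fx_gt0 fx_le] := f_range x xA.
have below : #|[set y in A | f y < f x]| <= (f x).-1.
  apply: (@card_le_inj_range _ _ f 1) => [y z|y]; rewrite !inE => /andP[yA lt_yx].
    by move=> /andP[zA _]; apply: f_inj.
  by have := f_range y yA; lia.
have above : #|A :\: [set y in A | f y < f x]| <= #|A| - (f x).-1.
  apply: (@card_le_inj_range _ _ f (f x)) => [y z|y]; rewrite !inE.
    by move=> /andP[_ yA] /andP[_ zA]; apply: f_inj.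
  move=> /andP[]; case: (boolP (y \in A)) => //= yA; rewrite -leqNgt => le_xy _.
  by have := f_range y yA; lia.
have := cardsID [set y in A | f y < f x] A.
have -> : A :&: [set y in A | f y < f x] = [set y in A | f y < f x].
  by apply/setIidPr/subsetP => y; rewrite inE => /andP[].
lia.
Qed.

Section BottomUpOrdering.
Variables (n : nat) (T : phylo_tree n).
Local Notation V := (pt_V T).
Local Notation par := (pt_par T).
Local Notation lab := (pt_lab T).
Local Notation leaf := (is_leaf par).
Local Notation ht := (height par).

Let base := n.+2.
(* [top] bounds every key, so the minimum over the (nonempty) children of an
   internal node is attained. *)
Let top := base ^ #|V|.+1.

Let par_acyclic : forall v, exists k, iter k (obind par) (Some v) = None :=
  @pt_acyclic _ T.

Fixpoint key_fuel f v :=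
  if f is f'.+1 then
    if leaf v then lab v
    else base ^ ht v + \big[minn/top]_(c in children par v) key_fuel f' c
  else 0.

Definition key v := key_fuel #|V|.+1 v.
Definition min_child_key v := \big[minn/top]_(c in children par v) key c.

Let key_fuel_stable f v : ht v < f -> key_fuel f.+1 v = key_fuel f v.
Proof.
elim: f v => // f IH v lt_vf /=; case: (leaf v) => //; congr (_ + _).
apply: eq_bigr => c cv; apply: IH.
exact: leq_trans (height_child par_acyclic cv) (ltnSE lt_vf).
Qed.

Lemma key_rec v : key v = if leaf v then lab v else base ^ ht v + min_child_key v.
Proof.
rewrite /min_child_key /key [in LHS]/=; case: (leaf v) => //; congr (_ + _).
apply: eq_bigr => c cv.
by rewrite key_fuel_stable // (leq_trans (height_child par_acyclic cv)) ?height_le_card.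
Qed.

Lemma min_child_key_le c v : c \in children par v -> min_child_key v <= key c.
Proof. exact: (@bigmin_le_cond _ _ _ top c (mem (children par v)) key). Qed.

Lemma key_lt_pow v : key v < base ^ (ht v).+1.
Proof.
have [m] := ubnP (ht v); elim: m v => // m IH v lt_vm; rewrite key_rec.
case: ifPn => [lv|/set0Pn[c cv]].
  by rewrite (eqP (_ : ht v == 0)) ?height_eq0 // expn1; have := pt_lab_range lv; lia.
have lt_min : min_child_key v < base ^ ht v.
  apply: leq_ltn_trans (min_child_key_le cv) (leq_trans (IH c _) _).
    exact: leq_trans (height_child par_acyclic cv) (ltnSE lt_vm).
  exact: leq_pexp2l (height_child par_acyclic cv).
have base_gt1 : 1 < base by [].
by rewrite expnS; nia.
Qed.

Lemma key_le_top v : key v <= top.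
Proof. exact/ltnW/(leq_trans (key_lt_pow v))/leq_pexp2l/height_le_card. Qed.

Lemma min_child_keyP v : ~~ leaf v ->
  exists2 c, c \in children par v & min_child_key v = key c.
Proof.
move=> /set0Pn[c0 c0v].
have [c cv min_c] :=
  @eq_bigmin _ _ _ top c0 (mem (children par v)) key c0v (fun c _ => key_le_top c).
by exists c.
Qed.

Lemma key_lt_height u v : ht u < ht v -> key u < key v.
Proof.
move=> lt_uv; have lv : ~~ leaf v by rewrite -height_eq0 -lt0n (leq_ltn_trans _ lt_uv).
apply: leq_trans (key_lt_pow u) _; rewrite key_rec (negPf lv).
exact: leq_trans (leq_pexp2l _ lt_uv) (leq_addr _ _).
Qed.

Lemma ltn_internal_key v : ~~ leaf v -> n < key v.
Proof.
move=> lv; have : 0 < ht v by rewrite lt0n height_eq0.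
rewrite key_rec (negPf lv); case: (ht v) => // h _.
by apply: ltn_addr; rewrite expnS; have := expn_gt0 base h; nia.
Qed.

Lemma key_inj : injective key.
Proof.
move=> u v; have [m] := ubnP (ht u); elim: m u v => // m IH u v lt_um eq_key.
have eq_ht : ht u = ht v.
  by case: (ltngtP (ht u) (ht v)) => // /key_lt_height; rewrite eq_key ltnn.
have eq_leaf : leaf u = leaf v by rewrite -!height_eq0 eq_ht.
move: eq_key; rewrite !key_rec -eq_leaf; case: ifPn => lu.
  have lv : leaf v by rewrite -eq_leaf.
  exact: pt_lab_inj lu lv.
have lv : ~~ leaf v by rewrite -eq_leaf.
rewrite eq_ht => /addnI.
have [cu cuu ->] := min_child_keyP lu.
have [cv cvv ->] := min_child_keyP lv.
move=> /(IH cu cv (leq_trans (height_child par_acyclic cuu) (ltnSE lt_um))) eq_c.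
by move: cuu cvv; rewrite eq_c !inE => /eqP -> /eqP [].
Qed.

Lemma rank_key_leaf v : leaf v -> rank key v = lab v.
Proof.
move=> lv; have /andP[_ lab_v_le] := pt_lab_range lv.
rewrite -(card_lt_inj_range (A := [set w | leaf w]) (f := lab)) ?inE //; last first.
- by move=> w; rewrite inE (pt_nleaves T) => /pt_lab_range.
- by move=> w1 w2; rewrite !inE; apply: pt_lab_inj.
congr _.+1; apply: eq_card => w; rewrite !inE [key v]key_rec lv.
have [lw|lw] := boolP (leaf w); first by rewrite key_rec lw.
by apply/negbTE; rewrite -leqNgt (leq_trans lab_v_le) // ltnW // ltn_internal_key.
Qed.

Lemma bottom_up_exists : exists l, is_bottom_up T l.
Proof.
exists (rank key); split.
- exact: rank_inj key_inj.
- by move=> v; rewrite rank_le_card.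
- exact: rank_key_leaf.
- by move=> u v /key_lt_height; rewrite ltn_rank.
move=> u v ht_u_gt0 eq_ht [x xu lt_x].
have lu : ~~ leaf u by rewrite -height_eq0 -lt0n.
have lv : ~~ leaf v by rewrite -height_eq0 -eq_ht -lt0n.
rewrite ltn_rank !key_rec (negPf lu) (negPf lv) eq_ht ltn_add2l.
have [c cv ->] := min_child_keyP lv.
by apply: leq_ltn_trans (min_child_key_le xu) _; rewrite -ltn_rank lt_x.
Qed.

End BottomUpOrdering.

Lemma bottom_up_spec n (T : phylo_tree n) : is_bottom_up T (bottom_up T).
Proof. by apply: epsilon_spec; apply: bottom_up_exists. Qed.

Section CycleParity.
Variable X : finType.

Lemma nth_tperm (x y : X) t i :
  x \notin t -> y \notin t -> nth x t i = tperm x y (nth y t i).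
Proof.
move=> xt yt; have [lt_it|le_ti] := ltnP i (size t); last by rewrite !nth_default ?tpermR.
rewrite (set_nth_default y x lt_it) tpermD //.
  by apply: contraNneq xt => ->; apply: mem_nth.
by apply: contraNneq yt => ->; apply: mem_nth.
Qed.

Lemma next_cons2_tperm (x y : X) t z : uniq [:: x, y & t] ->
  next [:: x, y & t] z = tperm x y (next (y :: t) z).
Proof.
case/andP; rewrite inE negb_or => /andP[xy xt] /andP[yt _].
have [->|zx] := eqVneq z x.
  by rewrite !next_nth mem_head inE (negPf xy) (negPf xt) /= eqxx tpermL.
rewrite !next_nth [z \in x :: _]inE (negPf zx) /=.
case: ifP => [_|zyt]; first by rewrite eq_sym (negPf zx) /= (nth_tperm _ xt yt).
rewrite tpermD // eq_sym //; apply: contraFneq zyt => <-; exact: mem_head.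
Qed.

Lemma odd_perm_cycle (s : seq X) (s_uniq : uniq s) :
  odd_perm (perm (can_inj (prev_next s_uniq))) = odd (size s).-1.
Proof.
elim: s s_uniq => [|x [|y t] IH] s_uniq.
- rewrite (_ : perm _ = 1%g) ?odd_perm1 //.
  by apply/permP => z; rewrite permE perm1.
- rewrite (_ : perm _ = 1%g) ?odd_perm1 //.
  by apply/permP => z; rewrite permE perm1 /=; case: eqP => [->|].
have yt_uniq : uniq (y :: t) by case/andP: s_uniq.
have xy : x != y by move: s_uniq; rewrite /= inE negb_or => /andP[/andP[]].
have -> : perm (can_inj (prev_next s_uniq)) =
    (perm (can_inj (prev_next yt_uniq)) * tperm x y)%g.
  by apply/permP => z; rewrite permM !permE next_cons2_tperm // permE.
by rewrite odd_permM IH odd_tperm xy addbT.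
Qed.

End CycleParity.

Lemma odd_kappa N (S : {set 'I_N}) : odd_perm (kappa S) = odd #|S|.-1.
Proof. by rewrite /kappa odd_perm_cycle /kappa_seq size_sort cardE. Qed.

Section Transpositions.
Local Open Scope group_scope.

Lemma prod_tperm_card_support (X : finType) (s : {perm X}) :
  exists2 ts : seq (X * X), all dpair ts &
    s = \prod_(t <- ts) tperm t.1 t.2 /\ size ts <= #|[pred x | s x != x]|.-1.
Proof.
have [m] := ubnP #|[pred x | s x != x]|; elim: m s => // m IH s /ltnSE-le_s_m.
case: (pickP (fun x => s x != x)) => [x sx | s_id]; last first.
  exists [::]; split => //; rewrite big_nil; apply/permP => x; apply/eqP/idPn.
  by rewrite perm1 s_id.
set s' := tperm x (s^-1 x) * s.
have supp_s' : [pred y | s' y != y] \subset [predD1 [pred y | s y != y] & x].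
  apply/subsetP => y; rewrite !inE permM permE /= -(canF_eq (permK _)).
  have [-> | ne_yx] := eqVneq y x; first by rewrite permKV eqxx.
  by case: (s y =P x) => // -> _; rewrite eq_sym.
have x_sx : x != s^-1 x by apply: contra sx => /eqP x_eq; rewrite {1}x_eq permKV.
have supp_x2 : [set x; s^-1 x] \subset [pred y | s y != y].
  by apply/subsetP => y; rewrite !inE => /orP[] /eqP ->; rewrite ?permKV // eq_sym.
have card_s : #|[pred y | s y != y]| = #|[predD1 [pred y | s y != y] & x]|.+1.
  by rewrite (cardD1 x) inE sx.
have card_s_ge2 : 2 <= #|[pred y | s y != y]|.
  by have := subset_leq_card supp_x2; rewrite cards2 x_sx.
have card_s' : #|[pred y | s' y != y]| <= #|[predD1 [pred y | s y != y] & x]|.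
  exact: subset_leq_card supp_s'.
have [|ts dts [def_s' size_ts]] := IH s'; first by lia.
exists ((x, s^-1 x) :: ts); first by rewrite /= x_sx.
split; first by rewrite big_cons -def_s' mulgA tperm2 mul1g.
by rewrite /=; lia.
Qed.

Lemma odd_min_transp N (s : {perm 'I_N}) : odd (min_transp s) = odd_perm s.
Proof.
rewrite /min_transp; case: ex_minnP => k /existsP[ts /andP[dts /eqP ->]] _.
by rewrite odd_perm_prod // size_tuple.
Qed.

Lemma min_transp_le N (s : {perm 'I_N}) : min_transp s <= N.-1.
Proof.
have [ts dts [def_s size_ts]] := prod_tperm_card_support s.
rewrite /min_transp; case: ex_minnP => k _ /(_ (size ts)) min_k.
apply: leq_trans (min_k _) (leq_trans size_ts _).
  by apply/existsP; exists (in_tuple ts); rewrite dts -def_s eqxx.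
by rewrite -!subn1 leq_sub2r // (leq_trans (max_card _)) ?card_ord.
Qed.

End Transpositions.

Lemma card_succ_labels (X : finType) N (A : {set X}) (l : X -> nat) :
  {in A &, injective l} -> {in A, forall x, 0 < l x <= N} ->
  #|[set j : 'I_N | [exists x in A, l x == j.+1]]| = #|A|.
Proof.
case: N => [|N] l_inj l_range.
  rewrite (_ : A = set0) ?cards0; last first.
    by apply/setP => x; rewrite inE; apply/negP => /l_range; lia.
  by apply/eqP; rewrite cards_eq0; apply/eqP/setP => -[].
have -> : [set j : 'I_N.+1 | [exists x in A, l x == j.+1]] =
    [set inord (l x).-1 | x in A].
  apply/setP => j; rewrite inE.
  apply/existsP/imsetP => [[x /andP[xA /eqP lx]]|[x xA ->]].
    by exists x => //; rewrite lx /= inord_val.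
  by exists x; rewrite xA /= inordK; have := l_range x xA; lia.
rewrite card_in_imset // => x y xA yA /(congr1 val) /=.
have /andP[lx_gt0 lx_le] := l_range x xA; have /andP[ly_gt0 ly_le] := l_range y yA.
have lx : (l x).-1 <= N by lia.
have ly : (l y).-1 <= N by lia.
by rewrite !inordK // => eq_l; apply: l_inj => //; lia.
Qed.

Lemma card_child_labels n (T : phylo_tree n) u :
  #|child_labels T u| = #|children (pt_par T) u|.
Proof.
have [r root] := pt_root T.
have [l_inj l_range _ l_height _] := bottom_up_spec T.
apply: card_succ_labels => [c1 c2 _ _ /l_inj //|c].
rewrite inE => /eqP pc.
have cr : c != r by apply/eqP => /(proj2 (root c)); rewrite pc.
have := l_height _ _ (height_lt_root (@pt_acyclic _ T) root cr).
have := l_range c; have := l_range r.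
have := card_le_double_leaves root (@pt_no_outdeg1 _ T); rewrite (pt_nleaves T); lia.
Qed.

Lemma odd_matching_perm n (T : phylo_tree n) : odd_perm (matching_perm T) = odd n.-1.
Proof.
have [r root] := pt_root T.
rewrite /matching_perm (big_morph _ (@odd_permM _) (@odd_perm1 _)).
under eq_bigr => u _ do rewrite odd_kappa card_child_labels.
rewrite -(big_morph _ oddD (erefl (odd 0))).
by rewrite (sum_internal_pred_card_children root) (pt_nleaves T).
Qed.

Theorem proposition2 (n : nat) (T1 T2 : phylo_tree n) :
  2 <= n -> ~~ odd (TD' T1 T2) /\ TD' T1 T2 < 2 * n - 2.
Proof.
move=> n_ge2; rewrite /TD'; split.
  by rewrite odd_min_transp odd_permM odd_permV !odd_matching_perm addbb.
by apply: leq_ltn_trans (min_transp_le _) _; lia.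
Qed.
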